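(* Let $r=r(n)\ge 4$ be an integer-valued function with $r=o(n^{1/8})$ and let $n$ be sufficiently large. Let $A$ be an independent set in $G(n,r,1)$, and let $A_0$, $I_0$, $A_1$, $P$ and the notion ''connected'' be as defined in the context. Then no element $x\in[n]\setminus(I_0\cup P)$ is connected to two different vertices of $A_0$.
   Context: $G(n,r,1)$ is the graph on $[n]^{(r)}$ in which two $r$-subsets are adjacent iff they intersect in exactly one element; thus any two distinct members of an independent set $A$ are disjoint or share at least two elements. Let $A_0=\{v_1,\dots,v_k\}\subset A$ be a subfamily of pairwise disjoint sets of maximum possible cardinality, and $I_0=v_1\cup\dots\cup v_k$. Let $A_1$ be the set of $v\in A\setminus A_0$ that intersect exactly one of $v_1,\dots,v_k$. Let $\omega=\omega(r,n)=1$ if $r=4$ and $\omega=r^5\binom{n}{r-5}$ if $r\ge5$. An element $x\in[n]\setminus I_0$ is connected to $v_i$ if at least $\omega$ members of $A_1$ contain $x$ and intersect $v_i$. Two distinct elements $x,y$ are joint if every $v\in A_1$ satisfies $|v\cap\{x,y\}|\ne 1$. $P$ is the set of elements of $[n]\setminus I_0$ that are joint with some other element of $[n]\setminus I_0$. *)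

From mathcomp Require Import all_boot.
Set Implicit Arguments. Unset Strict Implicit. Unset Printing Implicit Defensive.

Section GnR1.
Variables (n r : nat).
Notation V := {set 'I_n}.

(* A is an independent set of G(n,r,1): a family of r-subsets of [n] in
   which no two distinct members intersect in exactly one element. *)
Definition indep_Gnr1 (A : {set V}) : Prop :=
  (forall v, v \in A -> #|v| = r) /\
  (forall u v, u \in A -> v \in A -> u != v -> #|u :&: v| != 1).

Definition pairwise_disjoint (F : {set V}) : Prop :=
  forall u v, u \in F -> v \in F -> u != v -> [disjoint u & v].

Definition max_disjoint_subfamily (A A0 : {set V}) : Prop :=
  [/\ A0 \subset A, pairwise_disjoint A0 &
      forall B : {set V}, B \subset A -> pairwise_disjoint B -> #|B| <= #|A0|].

Definition I0 (A0 : {set V}) : V := cover A0.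

Definition A1 (A A0 : {set V}) : {set V} :=
  [set v in A :\: A0 | #|[set u in A0 | ~~ [disjoint u & v]]| == 1].

Definition omega : nat := if r == 4 then 1 else r ^ 5 * 'C(n, r - 5).

Definition connected_to (A A0 : {set V}) (x : 'I_n) (vi : V) : Prop :=
  omega <= #|[set v in A1 A A0 | (x \in v) && ~~ [disjoint v & vi]]|.

Definition joint (A A0 : {set V}) (x y : 'I_n) : Prop :=
  x != y /\ forall v, v \in A1 A A0 -> #|v :&: [set x; y]| != 1.

Definition Pset (A A0 : {set V}) (x : 'I_n) : Prop :=
  x \notin I0 A0 /\ exists y, y \notin I0 A0 /\ joint A A0 x y.

End GnR1.

From mathcomp Require Import all_boot zify.
Set Implicit Arguments. Unset Strict Implicit. Unset Printing Implicit Defensive.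

(* Let F_u and F_v be the members of A1 through x that meet u, resp. v.  A member
   w1 of F_u and a member w2 of F_v are distinct members of A sharing x, so they
   share a second point y, which lies outside I0.  As x is not in P, some z in A1
   meets {x, y} in exactly one point, and z misses u or v, say u.  Every w in F_u
   through y then contains x, y, a point of z outside {x, y} and two points of u,
   so r >= 5 and there are at most K = r^3 C(n, r-5) such w.  Counting the pairs
   (w1, w2) through their common points y <> x gives
   |F_u| |F_v| <= K r (|F_u| + |F_v|), which fails once both exceed omega = r^2 K. *)

Lemma card_bigcup_leq_sum (T I : finType) (P : pred I) (B : I -> {set T}) :
  #|\bigcup_(i | P i) B i| <= \sum_(i | P i) #|B i|.
Proof.
elim/big_rec2: _ => [|i U k _ IH]; first by rewrite cards0.
by apply: leq_trans (leq_card_setU _ _) _; rewrite leq_add2l.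
Qed.

Lemma mem_not_disjoint (T : finType) (B C : {pred T}) x :
  x \in B -> x \in C -> ~~ [disjoint B & C].
Proof. by move=> xB xC; apply/negP => /disjointFr/(_ xB); rewrite xC. Qed.

Section FiniteSetCounting.
Variable T : finType.
Implicit Types (S w : {set T}) (F G W : {set {set T}}).

Lemma card_supersets_le S k :
  #|[set w : {set T} | (#|w| == k) && (S \subset w)]| <= 'C(#|T|, k - #|S|).
Proof.
set H := [set w | _].
have inj : {in H &, injective (fun w => w :\: S)}.
  move=> w1 w2; rewrite !inE => /andP [_ s1] /andP [_ s2] e.
  by rewrite -(setID w1 S) -(setID w2 S) (setIidPr s1) (setIidPr s2) e.
rewrite -(card_in_imset inj) -card_draws; apply/subset_leq_card/subsetP => B.
case/imsetP=> w /[!inE] /andP [/eqP wk sw] ->.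
by rewrite cardsD (setIidPr sw) wk.
Qed.

Lemma card_uniform_covered_le W F k m :
  (forall w, w \in W -> #|w| = k /\ exists2 S, S \in F & #|S| = m /\ S \subset w) ->
  #|W| <= #|F| * 'C(#|T|, k - m).
Proof.
move=> cov.
pose H S := [set w : {set T} | (#|w| == k) && (S \subset w)].
apply: (@leq_trans #|\bigcup_(S | (S \in F) && (#|S| == m)) H S|).
  apply/subset_leq_card/subsetP => w /cov [wk [S SF [Sm Sw]]].
  by apply/bigcupP; exists S; rewrite ?inE ?SF ?Sm ?wk ?Sw ?eqxx.
apply: leq_trans (card_bigcup_leq_sum _ _) _.
apply: (@leq_trans (\sum_(S | (S \in F) && (#|S| == m)) 'C(#|T|, k - m))).
  by apply: leq_sum => S /andP [_ /eqP <-]; apply: card_supersets_le.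
rewrite sum_nat_const leq_mul2r; apply/orP; right.
by apply/subset_leq_card/subsetP => S; rewrite unfold_in => /andP [].
Qed.

Lemma sum_card_containing W :
  \sum_y #|[set w in W | y \in w]| = \sum_(w in W) #|w|.
Proof.
have count_in y : #|[set w in W | y \in w]| = \sum_(w in W) (y \in w : nat).
  rewrite -sum1_card [LHS]big_mkcond [RHS]big_mkcond /=.
  by apply: eq_bigr => w _; rewrite !inE; case: (w \in W); case: (y \in w).
rewrite (eq_bigr _ (fun y _ => count_in y)) exchange_big /=.
apply: eq_bigr => w _; rewrite -sum1_card [RHS]big_mkcond /=.
by apply: eq_bigr => y _; case: (y \in w).
Qed.

Lemma card_mul_le_sum_common x F G :
  (forall w1 w2, w1 \in F -> w2 \in G -> exists2 y, y != x & (y \in w1) && (y \in w2)) ->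
  #|F| * #|G| <=
    \sum_(y | y != x) #|[set w in F | y \in w]| * #|[set w in G | y \in w]|.
Proof.
move=> common; rewrite -cardsX.
under eq_bigr do rewrite -cardsX.
apply: leq_trans (card_bigcup_leq_sum _ _).
apply/subset_leq_card/subsetP => -[w1 w2] /setXP [w1F w2G].
have [y yx /andP [yw1 yw2]] := common _ _ w1F w2G.
by apply/bigcupP; exists y => //; rewrite !inE w1F w2G yw1 yw2.
Qed.

Lemma card_five (x y t a b : T) :
  x != y -> t \notin [set x; y] -> a != b -> [disjoint t |: [set x; y] & [set a; b]] ->
  #|t |: [set x; y] :|: [set a; b]| = 5.
Proof.
move=> xy txy ab dis.
by rewrite cardsU (disjoint_setI0 dis) cards0 subn0 cardsU1 txy !cards2 xy ab.
Qed.
End FiniteSetCounting.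

Lemma leq_mul_sum a b c : (a <= c) || (b <= c) -> a * b <= c * (a + b).
Proof.
case/orP => le_c; rewrite mulnDr.
  by apply: leq_trans (leq_addl _ _); rewrite leq_mul2r le_c orbT.
by apply: leq_trans (leq_addr _ _); rewrite [a * b]mulnC leq_mul2r le_c orbT.
Qed.

Section IndependentFamily.
Variables (n r : nat) (A A0 : {set {set 'I_n}}).
Hypotheses (indepA : indep_Gnr1 r A) (A0_subA : A0 \subset A).

Lemma A1P w :
  w \in A1 A A0 -> [/\ w \in A, w \notin A0 &
    forall u v, u \in A0 -> v \in A0 -> ~~ [disjoint u & w] -> ~~ [disjoint v & w] -> u = v].
Proof.
rewrite !inE => /andP [/andP [wA0 wA] /cards1P [s meets]]; split=> // u v uA0 vA0 uw vw.
have : u \in [set s]%SET by rewrite -meets inE uA0 uw.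
have : v \in [set s]%SET by rewrite -meets inE vA0 vw.
by rewrite !inE => /eqP -> /eqP ->.
Qed.

Lemma card_meet_gt1 w1 w2 :
  w1 \in A -> w2 \in A -> w1 != w2 -> ~~ [disjoint w1 & w2] -> 1 < #|w1 :&: w2|.
Proof.
move=> w1A w2A w12 meet; have := indepA.2 _ _ w1A w2A w12.
have : #|w1 :&: w2| != 0 by rewrite cards_eq0 setI_eq0.
by case: #|_| => [|[|k]].
Qed.

Lemma notin_I0 u y : u \in A0 -> y \notin I0 A0 -> y \notin u.
Proof. by move=> uA0; apply: contra => yu; apply/bigcupP; exists u. Qed.

Definition connectors x (u : {set 'I_n}) : {set {set 'I_n}} :=
  [set w in A1 A A0 | (x \in w) && ~~ [disjoint w & u]].

Definition five_sets x y (z u : {set 'I_n}) : {set {set 'I_n}} :=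
  [set (p.1.1 |: [set x; y]) :|: [set p.1.2; p.2] | p in setX (setX z u) u].

Lemma card_five_sets x y z u : z \in A -> u \in A -> #|five_sets x y z u| <= r ^ 3.
Proof.
move=> zA uA; apply: leq_trans (leq_imset_card _ _) _.
by rewrite !cardsX (indepA.1 _ zA) (indepA.1 _ uA) !expnS expn0 muln1 mulnA.
Qed.

Section FiveSet.
Variables (x y : 'I_n) (z u : {set 'I_n}).
Hypotheses (uA0 : u \in A0) (zA1 : z \in A1 A A0) (z_xy : #|z :&: [set x; y]| = 1).
Hypotheses (xy : x != y) (zu : [disjoint z & u]) (xu : x \notin u) (yu : y \notin u).

(* [w] meets [u] in two points and [z] in two points, one of which lies outside [{x, y}]
   because [z] contains only one of [x], [y]. *)
Lemma connector_five_set w :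
  w \in connectors x u -> y \in w ->
  exists2 S, S \in five_sets x y z u & #|S| = 5 /\ S \subset w.
Proof.
move=> /setIdP [wA1 /andP [xw w_u]] yw.
have [wA wA0 _] := A1P wA1; have [zA _ _] := A1P zA1.
have uA : u \in A by apply: (subsetP A0_subA).
have wu : w != u by apply: contraNneq wA0 => ->.
have /card_gt1P [a [b [aw_u bw_u ab]]] := card_meet_gt1 wA uA wu w_u.
move: aw_u bw_u; rewrite !inE => /andP [aw au] /andP [bw bu].
have xy_w : [set x; y] \subset w by apply/subsetP => q; rewrite !inE => /orP [] /eqP ->.
have wz : w != z.
  by apply: contra_eqN z_xy => /eqP <-; rewrite (setIidPr xy_w) cards2 xy.
have wz_meet : ~~ [disjoint w & z].
  have /card_gt0P [q] : 0 < #|z :&: [set x; y]| by rewrite z_xy.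
  by rewrite inE => /andP [qz /(subsetP xy_w) qw]; apply: mem_not_disjoint qw qz.
have : ~~ (w :&: z \subset [set x; y]).
  apply: contraTN (card_meet_gt1 wA zA wz wz_meet) => sub; rewrite -leqNgt -z_xy.
  by apply/subset_leq_card; rewrite subsetI subsetIr sub.
case/subsetPn=> t; rewrite inE => /andP [tw tz] txy.
have xyt_u : [disjoint t |: [set x; y] & u].
  rewrite disjoint_sym disjoints_subset; apply/subsetP => q qu.
  rewrite !inE; apply/negP => /or3P [] /eqP qE; move: qu;
  by rewrite qE ?(disjointFr zu tz) ?(negbTE xu) ?(negbTE yu).
exists ((t |: [set x; y]) :|: [set a; b]).
  by apply/imsetP; exists (t, a, b); rewrite ?inE ?tz ?au ?bu.
split.
  apply: card_five => //; apply: disjointWr xyt_u.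
  by apply/subsetP => q; rewrite !inE => /orP [] /eqP ->.
by apply/subsetP => q; rewrite !inE => /orP [/or3P [] | /orP []] /eqP ->.
Qed.

Lemma connectors_through_bound w :
  w \in connectors x u -> y \in w ->
  5 <= r /\ #|[set w in connectors x u | y \in w]| <= r ^ 3 * 'C(n, r - 5).
Proof.
have A1_card w' : w' \in connectors x u -> #|w'| = r.
  by move=> /setIdP [/A1P [w'A _ _] _]; apply: indepA.1.
move=> wF yw; have [S _ [S5 Sw]] := connector_five_set wF yw.
split; first by rewrite -S5 -(A1_card _ wF) subset_leq_card.
have [zA _ _] := A1P zA1; have uA : u \in A by apply: (subsetP A0_subA).
apply: leq_trans (card_uniform_covered_le (F := five_sets x y z u) _) _.
  move=> w' /setIdP [w'F yw'].
  by split; [apply: A1_card | apply: connector_five_set].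
by rewrite card_ord leq_mul2r card_five_sets ?orbT.
Qed.
End FiveSet.

Section TwoConnections.
Variables (x : 'I_n) (u v : {set 'I_n}).
Hypotheses (xI0 : x \notin I0 A0) (xP : ~ Pset A A0 x).
Hypotheses (uA0 : u \in A0) (vA0 : v \in A0) (uv : u != v).

Lemma connectors_meet w1 w2 :
  w1 \in connectors x u -> w2 \in connectors x v ->
  exists2 y, y != x & (y \in w1) && (y \in w2).
Proof.
move=> /setIdP [w1A1 /andP [xw1 w1u]] /setIdP [w2A1 /andP [xw2 w2v]].
have [w1A _ unique1] := A1P w1A1; have [w2A _ _] := A1P w2A1.
have w12 : w1 != w2.
  by apply: contraNneq uv => e; apply/eqP/unique1 => //; rewrite disjoint_sym // e.
have := card_meet_gt1 w1A w2A w12 (mem_not_disjoint xw1 xw2).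
rewrite (cardsD1 x) inE xw1 xw2 ltnS => /card_gt0P [y].
by rewrite !inE => /and3P [yx yw1 yw2]; exists y; rewrite ?yw1.
Qed.

Lemma connectors_common_notin_I0 y w1 w2 :
  w1 \in connectors x u -> w2 \in connectors x v -> y \in w1 -> y \in w2 ->
  y \notin I0 A0.
Proof.
move=> /setIdP [/A1P [_ _ unique1] /andP [_ w1u]] /setIdP [/A1P [_ _ unique2] /andP [_ w2v]].
move=> yw1 yw2; apply/negP => /bigcupP [B BA0 yB].
have Bu : B = u.
  by apply: unique1 => //; [apply: mem_not_disjoint yB yw1 | rewrite disjoint_sym].
have Bv : B = v.
  by apply: unique2 => //; [apply: mem_not_disjoint yB yw2 | rewrite disjoint_sym].
by move: uv; rewrite -Bu -Bv eqxx.
Qed.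

Lemma separating_member y :
  y \notin I0 A0 -> y != x -> exists2 z, z \in A1 A A0 & #|z :&: [set x; y]| = 1.
Proof.
move=> yI0 yx.
have [/exists_inP [z zA1 /eqP z_xy] | no_sep] :=
  boolP [exists z in A1 A A0, #|z :&: [set x; y]| == 1]; first by exists z.
case: xP; split=> //; exists y; split; [done | split; first by rewrite eq_sym].
by move=> z zA1; apply: contra no_sep => z_xy; apply/exists_inP; exists z.
Qed.

Lemma common_point_bound y w1 w2 :
  y != x -> w1 \in connectors x u -> w2 \in connectors x v -> y \in w1 -> y \in w2 ->
  5 <= r /\ ((#|[set w in connectors x u | y \in w]| <= r ^ 3 * 'C(n, r - 5)) ||
             (#|[set w in connectors x v | y \in w]| <= r ^ 3 * 'C(n, r - 5))).
Proof.
move=> yx w1F w2F yw1 yw2.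
have yI0 := connectors_common_notin_I0 w1F w2F yw1 yw2.
have [z zA1 z_xy] := separating_member yI0 yx.
have [_ _ unique_z] := A1P zA1.
have xy : x != y by rewrite eq_sym.
have [zu | zu] := boolP [disjoint z & u].
  have [r5 bound] := connectors_through_bound uA0 zA1 z_xy xy zu
    (notin_I0 uA0 xI0) (notin_I0 uA0 yI0) w1F yw1.
  by rewrite r5 bound.
have [zv | zv] := boolP [disjoint z & v].
  have [r5 bound] := connectors_through_bound vA0 zA1 z_xy xy zv
    (notin_I0 vA0 xI0) (notin_I0 vA0 yI0) w2F yw2.
  by rewrite r5 bound orbT.
by move: uv; rewrite (unique_z u v) ?eqxx // disjoint_sym.
Qed.

Lemma not_connected_to_both :
  r - 5 <= n -> 4 <= r ->
  @connected_to n r A A0 x u -> @connected_to n r A A0 x v -> False.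
Proof.
move=> rn r4 cu cv.
set K := r ^ 3 * 'C(n, r - 5).
have K_gt0 : 0 < K by rewrite muln_gt0 expn_gt0 bin_gt0 rn (leq_trans _ r4).
have omega_gt0 : 0 < omega n r.
  by rewrite /omega; case: ifP => // _; rewrite muln_gt0 expn_gt0 bin_gt0 rn (leq_trans _ r4).
have [w1 w1F] : exists w, w \in connectors x u by apply/card_gt0P; apply: leq_trans cu.
have [w2 w2F] : exists w, w \in connectors x v by apply/card_gt0P; apply: leq_trans cv.
have r5 : 5 <= r.
  have [y yx /andP [yw1 yw2]] := connectors_meet w1F w2F.
  by have [] := common_point_bound yx w1F w2F yw1 yw2.
have omegaE : omega n r = r * r * K.
  by rewrite /omega (gtn_eqF r5) /K !expnS expn0 muln1 !mulnA.
have through_sum s :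
    \sum_y #|[set w in connectors x s | y \in w]| = #|connectors x s| * r.
  rewrite sum_card_containing -sum_nat_const.
  by apply: eq_bigr => w /setIdP [/A1P [wA _ _] _]; apply: indepA.1.
have pairs := card_mul_le_sum_common connectors_meet.
have through_bound :
    \sum_(y | y != x) #|[set w in connectors x u | y \in w]| *
                      #|[set w in connectors x v | y \in w]|
    <= K * (#|connectors x u| * r + #|connectors x v| * r).
  rewrite -!through_sum -big_split [X in _ <= K * X](bigD1 x) //= mulnDr big_distrr.
  apply: leq_trans (leq_addl _ _).
  apply: leq_sum => y yx; apply: leq_mul_sum.
  have [-> // | /card_gt0P [w1' /setIdP [w1'F yw1']]] :=
    posnP #|[set w in connectors x u | y \in w]|.
  have [-> | /card_gt0P [w2' /setIdP [w2'F yw2']]] :=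
    posnP #|[set w in connectors x v | y \in w]|; first by rewrite orbT.
  by have [] := common_point_bound yx w1'F w2'F yw1' yw2'.
move: cu cv (leq_trans pairs through_bound); rewrite /connected_to omegaE -!/(connectors x _).
nia.
Qed.
End TwoConnections.
End IndependentFamily.

Theorem lemma2 (r : nat -> nat) :
  (forall n, 4 <= r n) ->
  (* r = o(n^{1/8}), i.e. r(n)^8 = o(n) *)
  (forall c : nat, exists N, forall n, N <= n -> c * r n ^ 8 <= n) ->
  exists N, forall n, N <= n ->
  forall (A A0 : {set {set 'I_n}}),
    indep_Gnr1 (r n) A ->
    max_disjoint_subfamily A A0 ->
    forall x : 'I_n, x \notin I0 A0 -> ~ Pset A A0 x ->
    forall u v, u \in A0 -> v \in A0 -> u != v ->
      @connected_to n (r n) A A0 x u -> @connected_to n (r n) A A0 x v -> False.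
Proof.
move=> r_ge4 r_small; have [N large] := r_small 1.
exists N => n le_Nn A A0 indepA [A0_subA _ _] x xI0 xP u v uA0 vA0 uv.
apply: (not_connected_to_both indepA A0_subA xI0 xP uA0 vA0 uv) (r_ge4 n).
(* Largeness of [n] only serves to make ['C(n, r - 5)], hence [omega], positive. *)
apply: leq_trans (leq_subr _ _) _; apply: leq_trans (large n le_Nn).
by rewrite mul1n -{1}[r n]expn1 leq_pexp2l // (leq_trans _ (r_ge4 n)).
Qed.
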